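(* Let $d\ge1$, $K>0$, $U$ a non-negative polynomial of degree $4$ with strictly positive leading coefficient, and let $\omega$ be a Borel probability measure on $\mathcal{X}=(\mathbb{R}^2)^{\mathbb{Z}^d}$ for which there is a constant $C_\omega>0$ such that, for all sufficiently small $\lambda>0$, $$\omega\bigl(e^{\lambda W_{\nu,k}}\bigr)\le e^{C_\omega(2k+1)^d}\qquad\forall\,\nu\in\mathbb{Z}^d,\ \forall\,k\in\mathbb{N}.$$ Then, for all sufficiently small $\lambda>0$, $$\lim_{N\to+\infty}e^{\lambda N}\,\omega(Q>N)=0;$$ in particular $\omega(\{x:Q(x)<\infty\})=1$.
   Context: Configurations are $x=\{(q_i,p_i)\}_{i\in\mathbb{Z}^d}$ with the product topology on $\mathcal{X}$; $|i-j|=\sum_\ell|i_\ell-j_\ell|$. For $\nu\in\mathbb{Z}^d$, $k\in\mathbb{N}$, $\Lambda_{\nu,k}$ is the cube of center $\nu$ and side $2k+1$, $W_{\nu,k}(x)=\sum_{i\in\Lambda_{\nu,k}}\{p_i^2/2+U(q_i)+1\}+\sum_{i,j\in\Lambda_{\nu,k},|j-i|=1}\frac K4(q_i-q_j)^2$, and $Q(x)=\sup_{\nu\in\mathbb{Z}^d}\sup_{k\in\mathbb{N},\,k>\log^{1/d}(e+|\nu|)}W_{\nu,k}(x)/(2k+1)^d$. *)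

From HB Require Import structures.
From mathcomp Require Import all_boot all_order all_algebra.
From mathcomp Require Import all_classical all_reals all_analysis.
Set Implicit Arguments. Unset Strict Implicit. Unset Printing Implicit Defensive.
Import Order.TTheory GRing.Theory Num.Theory.
Import numFieldTopology.Exports.
Local Open Scope classical_set_scope.
Local Open Scope ring_scope.

Definition site (d : nat) := 'I_d -> int.

Definition site_norm (d : nat) (i : site d) : nat := (\sum_(l < d) `|i l|%N)%N.

Definition config (R : realType) (d : nat) := site d -> (R * R)%type.

Definition qq (R : realType) (d : nat) (x : config R d) (i : site d) : R := (x i).1.
Definition pp (R : realType) (d : nat) (x : config R d) (i : site d) : R := (x i).2.

(* Generators of the product (= Borel, the product space being a countable
   product of copies of R^2) sigma-algebra: preimages of Borel subsets of R
   under the coordinate maps q_i and p_i. *)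
Definition coord_gen (R : realType) (d : nat) : set (set (config R d)) :=
  [set A | exists i : site d, exists B : set R, measurable B /\
     (A = [set x | B ((x i).1)] \/ A = [set x | B ((x i).2)])].

Definition X (R : realType) (d : nat) : measurableType _ := g_sigma_algebraType (@coord_gen R d).

(* the point of the cube Lambda_{nu,k} with offset a in {0..2k}^d *)
Definition cube_pt (d k : nat) (nu : site d) (a : {ffun 'I_d -> 'I_(2*k+1)}) : site d :=
  fun l => nu l + (a l)%:Z - k%:Z.

(* |i - j| for two cube offsets (same as for the corresponding sites) *)
Definition off_dist (d k : nat) (a b : {ffun 'I_d -> 'I_(2*k+1)}) : nat :=
  (\sum_(l < d) `|(a l)%:Z - (b l)%:Z|%N)%N.

Definition W (R : realType) (d : nat) (U : {poly R}) (K : R) (nu : site d) (k : nat)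
    (x : config R d) : R :=
  \sum_(a : {ffun 'I_d -> 'I_(2*k+1)})
      ((pp x (cube_pt nu a)) ^+ 2 / 2 + U.[qq x (cube_pt nu a)] + 1)
  + \sum_(a : {ffun 'I_d -> 'I_(2*k+1)}) \sum_(b : {ffun 'I_d -> 'I_(2*k+1)} | off_dist a b == 1%N)
      (K / 4 * (qq x (cube_pt nu a) - qq x (cube_pt nu b)) ^+ 2).

Definition Q (R : realType) (d : nat) (U : {poly R}) (K : R) (x : config R d) : \bar R :=
  ereal_sup [set r : \bar R | exists (nu : site d) (k : nat),
     (ln (expR (1 : R) + (site_norm nu)%:R)) `^ (d%:R^-1) < k%:R /\
     r = ((W U K nu k x) / ((2 * k + 1) ^ d)%:R)%:E].

From HB Require Import structures.
From mathcomp Require Import all_boot all_order all_algebra.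
From mathcomp Require Import all_classical all_reals all_analysis.
From mathcomp Require Import measurable_realfun.
From mathcomp Require Import zify ring lra.
Import Order.TTheory GRing.Theory Num.Theory.
Import numFieldTopology.Exports.
Local Open Scope classical_set_scope.
Local Open Scope ring_scope.

(* If (ln (e + |nu|))^(1/d) < k then k >= 1 and |nu| < exp (k^d), so nu lies in the
   cube of radius M_k = floor (exp (k^d)) around the origin, and {Q > N} is covered by
   the events {W_{nu,k} > N (2k+1)^d} for k >= 1 and nu in that cube.  By the
   exponential Chebyshev inequality each of these has probability at most
   exp ((C - lam N) (2k+1)^d).  Since (2k+1)^d dominates both k^d + 1 and k + 2, the
   (2 M_k + 1)^d <= exp (d (k^d + 2)) events of level k contribute at most
   exp (-2 m) / 2^k, where m = lam N - C - 2d >= 1.  Hence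
   omega (Q > N) <= 2 exp (-2 m), which beats exp (lam N); letting N -> oo along the
   events {Q > N} also gives Q < oo almost surely. *)

Lemma measurable_gtr {dT} {T : measurableType dT} {R : realType} (f : T -> R) (t : R) :
  measurable_fun setT f -> measurable [set x | t < f x].
Proof. by move=> mf; rewrite -preimage_itvoy -[X in measurable X]setTI; exact: mf. Qed.

Lemma measure_bigsetU_le {dT} {T : measurableType dT} {R : realType}
    (mu : {measure set T -> \bar R}) {I : Type} {s : seq I} {P : pred I}
    {F : I -> set T} :
  (forall i, measurable (F i)) ->
  (mu (\big[setU/set0]_(i <- s | P i) F i) <= \sum_(i <- s | P i) mu (F i))%E.
Proof.
move=> mF; elim: s => [|i s IH]; first by rewrite !big_nil measure0.
rewrite !big_cons; case: ifP => _ //.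
by apply: le_trans (measureU2 _ _ _) (leeD _ IH) => //; exact: bigsetU_measurable.
Qed.

Lemma chernoff_measure {dT} {T : measurableType dT} {R : realType}
    (mu : {measure set T -> \bar R}) (f : T -> R) (lam t : R) :
  0 <= lam -> measurable_fun setT f ->
  ((expR (lam * t))%:E * mu [set x | (t < f x)%R] <=
     \int[mu]_x (expR (lam * f x))%:E)%E.
Proof.
move=> lam_ge0 mf; have mA := measurable_gtr f t mf.
rewrite -[X in mu X]setIT -integral_indic //.
rewrite -(integralZl_indic measurableT (fun=> [set x | t < f x])) //; last first.
  by rewrite ltNge expR_ge0.
apply: ge0_le_integral => //.
- apply/measurable_EFinP/measurable_funM; first exact: measurable_cst.
  exact: measurable_indic.
- apply/measurable_EFinP/measurableT_comp => //.
  by apply: measurable_funM => //; exact: measurable_cst.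
move=> x _; rewrite lee_fin indicE; case: (boolP (x \in _)) => [/set_mem /ltW ft|_].
  by rewrite mulr1 ler_expR ler_wpM2l.
by rewrite mulr0 expR_ge0.
Qed.

Lemma expR_mul_decay_cvg0 {R : realType} (g : R -> R) (lam c : R) : 0 < lam ->
  (\forall N \near +oo, 0 <= g N <= c * expR (- 2 * (lam * N))) ->
  (fun N => expR (lam * N) * g N) @ +oo --> 0.
Proof.
move=> lam_gt0 g_le.
have scale_cvgy : (fun N => lam * N) @ +oo --> +oo.
  apply/cvgryPger => A A_real; near=> N; rewrite -(ler_pdivrMl _ _ lam_gt0).
  by near: N; apply: nbhs_pinfty_ge; rewrite num_real.
have decay_cvg0 : (fun N => expR (- (lam * N))) @ +oo --> 0.
  exact: cvg_comp _ _ scale_cvgy (@cvgr_expR R).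
apply: (@squeeze_cvgr _ _ _ _ (fun=> 0) (fun N => c * expR (- (lam * N)))).
- near=> N; have /andP[g_ge0 g_leN] : 0 <= g N <= c * expR (- 2 * (lam * N)).
    by near: N.
  rewrite mulr_ge0 ?expR_ge0 //= (le_trans (ler_wpM2l (expR_ge0 _) g_leN)) //.
  by rewrite mulrCA -expRD [_ + _](_ : _ = - (lam * N)) //; ring.
- exact: cvg_cst.
- by rewrite -[0](mulr0 c); apply: cvgM => //; exact: cvg_cst.
Unshelve. all: by end_near.
Qed.

Lemma prob_ltey_eq1 {dT} {T : measurableType dT} {R : realType} (P : probability T R)
    (q : T -> \bar R) (lam : R) : 0 <= lam ->
  (forall N : R, measurable [set x | (N%:E < q x)%E]) ->
  (fun N => expR (lam * N) * fine (P [set x | (N%:E < q x)%E])) @ +oo --> 0 ->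
  P [set x | (q x < +oo)%E] = 1%E.
Proof.
move=> lam_ge0 mq tail_cvg0.
set B := \bigcap_(n : nat) [set x | ((n%:R : R)%:E < q x)%E].
have mB : measurable B by exact: bigcapT_measurable.
have B_sub N : B `<=` [set x | (N%:E < q x)%E].
  by move=> x Bx; apply: lt_trans (Bx (Num.truncn N).+1 I); rewrite lte_fin truncnS_gt.
have -> : [set x | (q x < +oo)%E] = ~` B.
  apply/seteqP; split => x /=.
    move=> qx_fin Bx; have qx_gt0 : (0%:E < q x)%E := B_sub 0 x Bx.
    have : ((fine (q x))%:E < q x)%E := B_sub _ x Bx.
    by rewrite fineK ?ltxx // ge0_fin_numE ?ltW.
  move=> nBx; rewrite ltey; apply/eqP => qx_inf.
  by apply: nBx => n _ /=; rewrite qx_inf ltry.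
rewrite probability_setC // -[1%E in RHS]sube0; congr (_ - _)%E.
apply/eqP; rewrite eq_le measure_ge0 andbT -(fineK (fin_num_measure P _ mB)) lee_fin.
rewrite -(cvg_lim _ tail_cvg0) //; apply: limr_ge; first exact: cvgP tail_cvg0.
near=> N; apply: (le_trans (y := fine (P [set x | (N%:E < q x)%E]))).
  by rewrite fine_le ?fin_num_measure ?le_measure ?inE //; exact: B_sub.
by rewrite ler_peMl ?fine_ge0 ?measure_ge0 // -expR0 ler_expR mulr_ge0.
Unshelve. all: by end_near.
Qed.

Section admissible_sites.
Variables (R : realType) (d : nat).
Hypothesis d_gt0 : (0 < d)%N.

Definition admissible (k : nat) (nu : site d) : Prop :=
  (ln (expR (1 : R) + (site_norm nu)%:R)) `^ (d%:R^-1) < k%:R.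

Definition cube_radius (k : nat) : nat := Num.truncn (expR ((k ^ d)%:R : R)).

Let one_lt_expR1D (n : nat) : 1 < expR (1 : R) + n%:R.
Proof. by rewrite (lt_le_trans (pexpR_gt1 ltr01)) // lerDl. Qed.

Lemma admissible_ln_lt k nu :
  admissible k nu -> 0 < ln (expR (1 : R) + (site_norm nu)%:R) < (k ^ d)%:R.
Proof.
rewrite /admissible; set y := ln _ => adm_k.
have y_gt0 : 0 < y by rewrite ln_gt0.
have yE : y = (y `^ d%:R^-1) ^+ d.
  rewrite -powR_mulrn ?powR_ge0 // -powRrM mulVf ?powRr1 ?(ltW y_gt0) //.
  by rewrite pnatr_eq0 -lt0n.
by rewrite y_gt0 natrX yE ltrXn2r ?powR_ge0 // -lt0n.
Qed.

Lemma admissible_gt0 k nu : admissible k nu -> (0 < k)%N.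
Proof.
case: k => // /admissible_ln_lt /andP[y_gt0].
by rewrite exp0n // => /(lt_trans y_gt0); rewrite ltxx.
Qed.

Lemma admissible_norm_le k nu : admissible k nu -> (site_norm nu <= cube_radius k)%N.
Proof.
move=> /admissible_ln_lt /andP[_ ln_lt]; rewrite truncn_ge_nat ?expR_ge0 // ltW //.
apply: lt_le_trans (_ : expR 1 + (site_norm nu)%:R <= _); first by rewrite ltrDr expR_gt0.
by rewrite -[leLHS]lnK ?ler_expR ?ltW // posrE (lt_trans ltr01).
Qed.

Lemma admissible_in_cube k nu : admissible k nu ->
  exists a : {ffun 'I_d -> 'I_(2 * cube_radius k + 1)}, nu = cube_pt (fun=> 0) a.
Proof.
move=> /admissible_norm_le norm_le.
have coord_le l : (`|nu l| <= cube_radius k)%N.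
  by apply: leq_trans norm_le; rewrite /site_norm (bigD1 l) //= leq_addr.
have size_cube : (2 * cube_radius k + 1 = (2 * cube_radius k).+1)%N by rewrite addn1.
exists [ffun l => cast_ord (esym size_cube) (inord (absz (nu l + (cube_radius k)%:Z)))].
by apply/funext => l; rewrite /cube_pt ffunE /= inordK; have := coord_le l; lia.
Qed.

Let two_le_expR1 : 2 <= expR (1 : R).
Proof. by rewrite (le_trans _ (expR_ge1Dx 1)). Qed.

Lemma card_cube_le k :
  ((2 * cube_radius k + 1) ^ d)%:R <= expR (d%:R * ((k ^ d)%:R + 2)) :> R.
Proof.
set E := expR ((k ^ d)%:R : R).
have E_ge1 : 1 <= E by rewrite (le_trans _ (expR_ge1Dx _)) // lerDl.
have radius_le : (cube_radius k)%:R <= E by rewrite truncn_le expR_ge0.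
have three_le : 3 <= expR 2 :> R.
  rewrite -[2]mulr1 expRM_natl (le_trans _ (lerXn2r _ _ _ two_le_expR1)) ?nnegrE //.
  by rewrite [X in _ <= X](_ : _ = 4); lra.
have side_le : (2 * cube_radius k + 1)%:R <= E * expR 2.
  apply: (le_trans (_ : _ <= 3 * E)); first by rewrite natrD natrM; lra.
  by rewrite mulrC ler_pM2l // (lt_le_trans ltr01).
by rewrite expRM_natl natrX lerXn2r ?nnegrE // expRD.
Qed.

Lemma cube_weight_le (m : R) k : (0 < k)%N -> 1 <= m ->
  ((2 * cube_radius k + 1) ^ d)%:R * expR (- (m + 2 * d%:R) * ((2 * k + 1) ^ d)%:R)
    <= expR (- 2 * m) / 2 ^+ k.
Proof.
move=> k_gt0 m_ge1; set T := ((2 * k + 1) ^ d)%:R.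
have T_gt : (k ^ d)%:R + 1 <= T.
  by rewrite natr1 ler_nat ltn_exp2r //; lia.
have T_ge : k%:R + 2 <= T.
  by rewrite -natrD ler_nat (leq_trans _ (leq_pexp2l _ d_gt0)) ?expn1 //; lia.
apply: le_trans (ler_wpM2r (expR_ge0 _) (card_cube_le k)) _.
rewrite -expRD; apply: (le_trans (y := expR (- 2 * m - k%:R))).
  rewrite ler_expR.
  have : 0 <= m * (T - k%:R - 2) by rewrite mulr_ge0 //; lra.
  have : 0 <= d%:R * (T - (k ^ d)%:R - 1) by rewrite mulr_ge0 //; lra.
  have : 0 <= (m - 1) * k%:R by rewrite mulr_ge0 //; lra.
  have : 0 <= d%:R * (k ^ d)%:R :> R by [].
  nra.
rewrite expRB ler_pM2l ?expR_gt0 // lef_pV2 ?posrE ?expR_gt0 ?exprn_gt0 //.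
by rewrite -[k%:R]mulr1 expRM_natl lerXn2r ?nnegrE ?expR_ge0.
Qed.

End admissible_sites.

Arguments admissible R {d}.
Arguments admissible_gt0 {R d} d_gt0 {k nu}.
Arguments admissible_in_cube {R d} d_gt0 {k nu}.
Arguments cube_weight_le {R d}.

Section exceedance_events.
Variables (R : realType) (d : nat) (U : {poly R}) (K : R).
Hypothesis d_gt0 : (0 < d)%N.

Local Notation cube_offset k := {ffun 'I_d -> 'I_(2 * cube_radius R d k + 1)}.
Local Notation cube_volume k := (((2 * k + 1) ^ d)%:R : R).

Lemma measurable_qq (i : site d) : measurable_fun [set: X R d] (fun x => qq x i).
Proof.
move=> _ B mB; rewrite setTI; apply: sub_sigma_algebra.
by exists i, B; split => //; left.
Qed.

Lemma measurable_pp (i : site d) : measurable_fun [set: X R d] (fun x => pp x i).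
Proof.
move=> _ B mB; rewrite setTI; apply: sub_sigma_algebra.
by exists i, B; split => //; right.
Qed.

Lemma measurable_W nu k : measurable_fun [set: X R d] (W U K nu k).
Proof.
have mU : measurable_fun [set: R] (horner U).
  by apply: continuous_measurable_fun; exact: continuous_horner.
apply: measurable_funD; apply: measurable_sum => a.
  apply: measurable_funD; last exact: measurable_cst.
  apply: measurable_funD; last exact: measurableT_comp mU (measurable_qq _).
  apply: measurable_funM; last exact: measurable_cst.
  by apply: measurable_funX; exact: measurable_pp.
(* [measurable_sum] only handles sums without a filtering predicate. *)
apply: (eq_measurable_fun (fun x : X R d =>
    \sum_(b <- [seq b <- index_enum _ | off_dist a b == 1%N])
      K / 4 * (qq x (cube_pt nu a) - qq x (cube_pt nu b)) ^+ 2)).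
  by move=> x _; rewrite big_filter.
apply: measurable_sum => b.
apply: measurable_funM; first exact: measurable_cst.
by apply: measurable_funX; apply: measurable_funB; exact: measurable_qq.
Qed.

Definition W_gt (N : R) (k : nat) (nu : site d) : set (X R d) :=
  [set x | N * cube_volume k < W U K nu k x].

Definition W_gt_admissible (N : R) (k : nat) : set (X R d) :=
  \big[setU/set0]_(a : cube_offset k | `[< admissible R k (cube_pt (fun=> 0) a) >])
    W_gt N k (cube_pt (fun=> 0) a).

Lemma measurable_W_gt_admissible N k : measurable (W_gt_admissible N k).
Proof. by apply: bigsetU_measurable => a _; apply: measurable_gtr; exact: measurable_W. Qed.

Lemma W_gt_admissible0 N : W_gt_admissible N 0 = set0.
Proof.
rewrite /W_gt_admissible big_pred0 // => a.
by apply/negbTE/asboolP => /(admissible_gt0 d_gt0).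
Qed.

Lemma Q_gt_bigcup N :
  [set x : X R d | (N%:E < Q U K x)%E] = \bigcup_k W_gt_admissible N k.
Proof.
have volume_gt0 k : 0 < cube_volume k by rewrite ltr0n expn_gt0 addn1.
apply/seteqP; split => x /=.
  move=> /ereal_sup_gt[_ [nu [k [adm_k ->]]]].
  rewrite lte_fin ltr_pdivlMr // => W_gt_N.
  have [a nuE] := admissible_in_cube d_gt0 adm_k.
  exists k => //; rewrite /W_gt_admissible -bigcup_seq_cond.
  by exists a; rewrite /= ?mem_index_enum -?nuE //; apply/asboolP.
move=> [k _]; rewrite /W_gt_admissible -bigcup_seq_cond.
move=> -[a /= /andP[_ /asboolP adm_k]].
rewrite /W_gt /= -ltr_pdivlMr // -lte_fin => W_gt_N.
by apply: lt_le_trans W_gt_N (ereal_sup_ubound _); exists (cube_pt (fun=> 0) a), k.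
Qed.

Lemma measurable_Q_gt N : measurable [set x : X R d | (N%:E < Q U K x)%E].
Proof.
rewrite Q_gt_bigcup; apply: bigcupT_measurable => k.
exact: measurable_W_gt_admissible.
Qed.

End exceedance_events.

Arguments measurable_W {R d}.
Arguments W_gt {R d}.
Arguments W_gt_admissible {R d}.
Arguments measurable_W_gt_admissible {R d}.
Arguments W_gt_admissible0 {R d}.
Arguments Q_gt_bigcup {R d}.
Arguments measurable_Q_gt {R d}.

Section exceedance_probability.
Variables (R : realType) (d : nat) (U : {poly R}) (K : R).
Variables (omega : probability (X R d) R) (C lam : R).
Hypothesis d_gt0 : (0 < d)%N.
Hypothesis lam_gt0 : 0 < lam.
Hypothesis mgf_W_le : forall (nu : site d) (k : nat),
  (\int[omega]_x (expR (lam * W U K nu k x))%:E <=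
    (expR (C * ((2 * k + 1) ^ d)%:R))%:E)%E.

Local Notation cube_offset k := {ffun 'I_d -> 'I_(2 * cube_radius R d k + 1)}.
Local Notation cube_volume k := (((2 * k + 1) ^ d)%:R : R).

Lemma prob_W_gt_le N k nu :
  (omega (W_gt U K N k nu) <= (expR ((C - lam * N) * cube_volume k))%:E)%E.
Proof.
have mW := measurable_W U K nu k.
have fin_W_gt := fin_num_measure omega _ (measurable_gtr _ (N * cube_volume k) mW).
rewrite -(fineK fin_W_gt) lee_fin mulrBl expRB ler_pdivlMr ?expR_gt0 // mulrC.
rewrite -lee_fin EFinM fineK // -mulrA.
exact: le_trans (chernoff_measure omega _ lam _ (ltW lam_gt0) mW) (mgf_W_le nu k).
Qed.

Lemma prob_W_gt_admissible_le N k :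
  (omega (W_gt_admissible U K N k) <=
    (((2 * cube_radius R d k + 1) ^ d)%:R * expR ((C - lam * N) * cube_volume k))%:E)%E.
Proof.
have mW_gt (a : cube_offset k) : measurable (W_gt U K N k (cube_pt (fun=> 0) a)).
  by apply: measurable_gtr; exact: measurable_W.
apply: le_trans (measure_bigsetU_le omega mW_gt) _.
apply: le_trans (lee_sum _ (fun a _ => prob_W_gt_le N k _)) _.
rewrite sumEFin lee_fin sumr_const -[expR _ *+ _]mulr_natl ler_pM2r ?expR_gt0 // ler_nat.
by rewrite (leq_trans (max_card _)) // card_ffun !card_ord.
Qed.

Lemma prob_Q_gt_le N : 1 <= lam * N - C - 2 * d%:R ->
  (omega [set x | (N%:E < Q U K x)%E] <=
    (2 * expR (- 2 * (lam * N - C - 2 * d%:R)))%:E)%E.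
Proof.
set m := lam * N - C - 2 * d%:R => m_ge1.
have mW_gt k := @measurable_W_gt_admissible R d U K N k.
rewrite Q_gt_bigcup //.
apply: le_trans (measure_sigma_subadditive omega mW_gt
  (bigcupT_measurable _ mW_gt) (@subset_refl _ _)) _.
apply: le_trans (epsilon_trick0 xpredT _); last by rewrite mulr_ge0 ?expR_ge0.
apply: lee_nneseries => // -[|k] _.
  by rewrite W_gt_admissible0 // measure0 lee_fin divr_ge0 ?mulr_ge0 ?expR_ge0.
apply: le_trans (prob_W_gt_admissible_le N k.+1) _.
rewrite lee_fin [C - lam * N](_ : _ = - (m + 2 * d%:R)); last by rewrite /m; ring.
apply: le_trans (cube_weight_le d_gt0 m k.+1 isT m_ge1) _.
by rewrite natrX (exprS _ k.+1) -mulf_div divff ?mul1r.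
Qed.

Lemma Q_tail_cvg :
  (fun N => expR (lam * N) * fine (omega [set x | (N%:E < Q U K x)%E])) @ +oo --> 0.
Proof.
apply: (expR_mul_decay_cvg0 _ lam (2 * expR (2 * (C + 2 * d%:R))) lam_gt0).
near=> N.
have m_ge1 : 1 <= lam * N - C - 2 * d%:R.
  have : (1 + C + 2 * d%:R) / lam <= N.
    by near: N; apply: nbhs_pinfty_ge; rewrite num_real.
  by rewrite ler_pdivrMr //; lra.
have fin_Q_gt := fin_num_measure omega _ (measurable_Q_gt U K d_gt0 N).
rewrite fine_ge0 ?measure_ge0 //= -lee_fin fineK //.
apply: le_trans (prob_Q_gt_le N m_ge1) _.
by rewrite lee_fin -mulrA ler_pM2l // -expRD ler_expR; lra.
Unshelve. all: by end_near.
Qed.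

End exceedance_probability.

Arguments Q_tail_cvg {R d U K omega C lam}.

Theorem mainTheorem5 (R : realType) (d : nat) (K : R) (U : {poly R})
  (omega : probability (X R d) R) :
  (1 <= d)%N -> 0 < K ->
  size U = 5%N -> 0 < lead_coef U -> (forall r : R, 0 <= U.[r]) ->
  (exists C : R, 0 < C /\ exists lam0 : R, 0 < lam0 /\
     forall lam : R, 0 < lam -> lam <= lam0 ->
     forall (nu : site d) (k : nat),
       (\int[omega]_x (expR (lam * W U K nu k x))%:E <=
         (expR (C * ((2 * k + 1) ^ d)%:R))%:E)%E) ->
  exists lam0 : R, 0 < lam0 /\
    (forall lam : R, 0 < lam -> lam <= lam0 ->
      (fun N : R => expR (lam * N) * fine (omega [set x | (N%:E < Q U K x)%E]))
        @ +oo --> 0)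
    /\ omega [set x | (Q U K x < +oo)%E] = 1%E.
Proof.
move=> d_gt0 _ _ _ _ [C [_ [lam0 [lam0_gt0 mgf_W_le]]]].
have tail_cvg lam (lam_gt0 : 0 < lam) (lam_le : lam <= lam0) :=
  Q_tail_cvg d_gt0 lam_gt0 (mgf_W_le lam lam_gt0 lam_le).
exists lam0; split=> //; split; first exact: tail_cvg.
apply: (prob_ltey_eq1 _ _ _ (ltW lam0_gt0) (measurable_Q_gt U K d_gt0)).
exact: tail_cvg lam0 lam0_gt0 (lexx _).
Qed.
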